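(* Let $p\in(0,1)$ and let $(\lambda_n)_{n\ge1}$ be a sequence with $\lambda_1=1$ and $0\le\lambda_n\le\lambda_{n-1}$ for all $n>1$. Let $r_1,r_2,\dots$ be $\{0,1\}$-valued random variables with $\Pr(r_1=1)=p$ and, for every $n\ge2$, $\Pr(r_n=1\mid r_1,\dots,r_{n-1})=\lambda_n p+(1-\lambda_n)\bar p_{n-1}$, where $\bar p_m=\frac1m\sum_{i=1}^m r_i$. Then for every $n\ge1$, \[\mathbb{E}\big[(\bar p_n-p)^2\big]=p(1-p)\Big(\frac1{n^2}+\sum_{i=1}^{n-1}\frac1{i^2}\prod_{j=i+1}^{n}\frac{(j-1)(j+1-2\lambda_j)}{j^2}\Big).\] *)

From HB Require Import structures.
From mathcomp Require Import all_boot all_order all_algebra.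
From mathcomp Require Import all_classical all_reals all_analysis.
Set Implicit Arguments. Unset Strict Implicit. Unset Printing Implicit Defensive.
Import Order.TTheory GRing.Theory Num.Theory.
Local Open Scope ring_scope.
Local Open Scope classical_set_scope.

Definition pbar {T : Type} {R : realType} (r : nat -> T -> R) (m : nat) (x : T) : R :=
  m%:R^-1 * \sum_(1 <= i < m.+1) r i x.

Definition history {T : Type} {R : realType} (r : nat -> T -> R) (m : nat)
  (b : nat -> bool) : set T :=
  [set x | forall i, (1 <= i <= m)%N -> r i x = (b i)%:R].

Definition bmean {R : realType} (b : nat -> bool) (m : nat) : R :=
  m%:R^-1 * \sum_(1 <= i < m.+1) ((b i)%:R : R).

From HB Require Import structures.
From mathcomp Require Import all_boot all_order all_algebra.
From mathcomp Require Import all_classical all_reals all_analysis.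
From mathcomp Require Import ring lra.
Import Order.TTheory GRing.Theory Num.Theory.
Local Open Scope ring_scope.
Local Open Scope classical_set_scope.

(** Conditioning on the history r_1, ..., r_m turns the expectation of any
  function of that history into a finite sum over 0/1 patterns weighted by the
  probabilities of the history events.  Writing D_m = pbar_m - p, one has
  (m+1) D_(m+1) = m D_m - p + r_(m+1), and given the history r_(m+1) is a
  Bernoulli variable of mean p + (1 - lam_(m+1)) D_m.  Hence
  E[D_(m+1)] = (m+1 - lam_(m+1))/(m+1) E[D_m], which vanishes because lam_1 = 1,
  and, using r^2 = r,
  E[D_(m+1)^2] = (m (m+2 - 2 lam_(m+1)) E[D_m^2] + p(1-p)) / (m+1)^2.
  Unrolling this first-order linear recurrence gives the formula. *)

Lemma linear_recurrence_unroll (R : comPzRingType) (x w c : nat -> R) :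
  x 1%N = w 1%N ->
  (forall n, (1 <= n)%N -> x n.+1 = w n.+1 + c n.+1 * x n) ->
  forall n, (1 <= n)%N ->
  x n = w n + \sum_(1 <= i < n) (w i * \prod_(i.+1 <= j < n.+1) c j).
Proof.
move=> x1 xS; elim=> [//|[|n] IH _]; first by rewrite big_geq ?addr0.
rewrite xS // IH // mulrDr big_distrr [in RHS]big_nat_recr //= big_nat1.
rewrite [w n.+1 * _]mulrC [in RHS]addrC; congr (_ + (_ + _)).
apply: eq_big_nat => i /andP[_ lti].
by rewrite [in RHS]big_nat_recr /=; [rewrite mulrC -mulrA | exact: ltnW].
Qed.

Lemma integral_sum_indic d (T : measurableType d) (R : realType)
    (P : probability T R) (I : finType) (c : I -> R) (A : I -> set T) :
  (forall i, measurable (A i)) ->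
  (\int[P]_x (\sum_i c i * \1_(A i) x)%:E = (\sum_i c i * fine (P (A i)))%:E)%E.
Proof.
move=> mA; rewrite -sumEFin; under eq_integral do rewrite -sumEFin.
rewrite integral_sum //= => [|i].
  apply: eq_bigr => i _; under eq_integral do rewrite EFinM.
  rewrite integralZl ?integral_indic ?setIT ?EFinM ?fineK ?fin_num_measure //.
  exact: integrable_indic.
under eq_fun do rewrite EFinM.
by apply: integrableZl => //; exact: integrable_indic.
Qed.

Section HistoryPatterns.
Set Implicit Arguments. Unset Strict Implicit.
Variables (d : measure_display) (T : measurableType d) (R : realType).
Variables (P : probability T R) (r : nat -> T -> R).
Hypothesis r_measurable : forall i, (1 <= i)%N -> measurable_fun setT (r i).
Hypothesis r01 : forall i x, (1 <= i)%N -> r i x = 0 \/ r i x = 1.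

(* A pattern b : {ffun 'I_m -> bool} records r_1, ..., r_m, with b j standing
   for r_(j+1); pattern_seq b is its 1-indexed extension by false. *)
Definition pattern_seq m (b : {ffun 'I_m -> bool}) (i : nat) : bool :=
  if insub i.-1 is Some j then b j else false.

Definition hist_pattern m x : {ffun 'I_m -> bool} :=
  [ffun j : 'I_m => r j.+1 x == 1].

Definition hist m (b : {ffun 'I_m -> bool}) : set T := history r m (pattern_seq b).

Definition expect_hist m (K : {ffun 'I_m -> bool} -> R) : R :=
  \sum_b K b * fine (P (hist b)).

Lemma pattern_seqE m (b : {ffun 'I_m -> bool}) (j : 'I_m) :
  pattern_seq b j.+1 = b j.
Proof.
rewrite /pattern_seq /=; case: insubP => [k _ kj|]; last by rewrite ltn_ord.
by congr (b _); apply: val_inj.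
Qed.

Lemma r_boolE i x : (1 <= i)%N -> r i x = (r i x == 1)%:R.
Proof. by move=> i1; case: (r01 x i1) => ->; rewrite ?eqxx // eq_sym oner_eq0. Qed.

Lemma r_hist_pattern m x i :
  (1 <= i <= m)%N -> r i x = (pattern_seq (hist_pattern m x) i)%:R.
Proof.
case: i => [//|k] /= km.
by rewrite (pattern_seqE _ (Ordinal km)) ffunE -r_boolE.
Qed.

Lemma hist_patternP m x (b : {ffun 'I_m -> bool}) :
  hist b x <-> hist_pattern m x = b.
Proof.
split=> [hx|<- i]; last exact: r_hist_pattern.
apply/ffunP => j; rewrite ffunE.
have := hx j.+1; rewrite pattern_seqE => ->; last by rewrite /= ltn_ord.
by case: (b j); rewrite ?eqxx // eq_sym oner_eq0.
Qed.

Lemma history0 (c : nat -> bool) : history r 0 c = setT.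
Proof. by apply/seteqP; split=> x // _ i /andP[i1 /(leq_trans i1)]. Qed.

Lemma measurable_history m (c : nat -> bool) : measurable (history r m c).
Proof.
elim: m => [|m IH]; first by rewrite history0.
suff -> : history r m.+1 c =
          history r m c `&` (setT `&` r m.+1 @^-1` [set (c m.+1)%:R]).
  by apply: measurableI => //; apply: r_measurable.
apply/seteqP; split=> x.
  move=> hx; split; first by move=> i /andP[i1 im]; apply: hx; rewrite i1 ltnW.
  by split=> //; apply: hx; rewrite /= leqnn.
move=> [hx [_ hm]] i /andP[i1]; rewrite leq_eqVlt => /orP[/eqP -> //|im].
by apply: hx; rewrite i1.
Qed.

Lemma sum_indic_hist m (K : {ffun 'I_m -> bool} -> R) x :
  \sum_b K b * \1_(hist b) x = K (hist_pattern m x).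
Proof.
rewrite (bigD1 (hist_pattern m x)) //= big1 => [|b /eqP hb].
  by rewrite indicE mem_set ?mulr1 ?addr0 //; apply/hist_patternP.
by rewrite indicE memNset ?mulr0 // => /hist_patternP/esym.
Qed.

Lemma integral_hist_pattern m (K : {ffun 'I_m -> bool} -> R) :
  (\int[P]_x (K (hist_pattern m x))%:E = (expect_hist K)%:E)%E.
Proof.
under eq_integral do rewrite -sum_indic_hist.
by rewrite integral_sum_indic // => b; exact: measurable_history.
Qed.

Lemma expect_hist_cst m a : expect_hist (fun _ : {ffun 'I_m -> bool} => a) = a.
Proof.
apply: EFin_inj; rewrite -integral_hist_pattern integral_cst //.
by rewrite -[RHS]mule1; congr (_ * _)%E; exact: probability_setT.
Qed.

Lemma expect_histD m (K1 K2 : {ffun 'I_m -> bool} -> R) :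
  expect_hist (fun b => K1 b + K2 b) = expect_hist K1 + expect_hist K2.
Proof. by rewrite /expect_hist -big_split; apply: eq_bigr => b _; rewrite mulrDl. Qed.

Lemma expect_histZ m a (K : {ffun 'I_m -> bool} -> R) :
  expect_hist (fun b => a * K b) = a * expect_hist K.
Proof. by rewrite /expect_hist big_distrr; apply: eq_bigr => b _; rewrite -mulrA. Qed.

Variables (p : R) (lam : nat -> R).
Hypothesis lam1 : lam 1%N = 1.
Hypothesis P_r1 : P [set x | r 1%N x = 1] = p%:E.
Hypothesis P_cond : forall (n : nat) (b : nat -> bool), (2 <= n)%N ->
  P (history r n.-1 b `&` [set x | r n x = 1]) =
  ((lam n * p + (1 - lam n) * bmean b n.-1)%:E * P (history r n.-1 b))%E.

Definition dev m (b : {ffun 'I_m -> bool}) : R := bmean (pattern_seq b) m - p.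

Definition cond_prob m (b : {ffun 'I_m -> bool}) : R := p + (1 - lam m.+1) * dev b.

Lemma prob_hist_next m (b : {ffun 'I_m -> bool}) :
  fine (P (hist b `&` [set x | r m.+1 x = 1])) = cond_prob b * fine (P (hist b)).
Proof.
case: m b => [|m] b.
  rewrite /hist history0 setTI P_r1 [P _]probability_setT /cond_prob lam1.
  by rewrite subrr mul0r addr0 mulr1.
rewrite /hist (P_cond (pattern_seq b) (isT : (2 <= m.+2)%N)).
rewrite -[P (history _ _ _)]fineK.
  by rewrite -EFinM /= /cond_prob /dev; congr (_ * _); ring.
exact/fin_num_measure/measurable_history.
Qed.

Lemma integral_hist_next m (F G : {ffun 'I_m -> bool} -> R) :
  (\int[P]_x (F (hist_pattern m x) + G (hist_pattern m x) * r m.+1 x)%:E =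
   (expect_hist (fun b => F b + G b * cond_prob b))%:E)%E.
Proof.
pose c (tb : bool * {ffun 'I_m -> bool}) := if tb.1 then G tb.2 else F tb.2.
pose A (tb : bool * {ffun 'I_m -> bool}) :=
  if tb.1 then hist tb.2 `&` [set x | r m.+1 x = 1] else hist tb.2.
have r_mset : measurable [set x | r m.+1 x = 1].
  by have := r_measurable (ltn0Sn m) measurableT (measurable_set1 1); rewrite setTI.
have cA x : F (hist_pattern m x) + G (hist_pattern m x) * r m.+1 x =
    \sum_tb c tb * \1_(A tb) x.
  rewrite -(pair_big xpredT xpredT (fun t b => c (t, b) * \1_(A (t, b)) x)) /=.
  rewrite big_bool /= /c /A /=.
  under eq_bigr do rewrite indicI /= mulrA.
  rewrite -big_distrl /= !sum_indic_hist addrC; congr (_ + _ * _).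
  rewrite indicE; case: (r01 x (ltn0Sn m)) => rx; rewrite rx.
    by rewrite memNset //= rx => /eqP; rewrite eq_sym oner_eq0.
  by rewrite mem_set.
under eq_integral do rewrite cA.
rewrite integral_sum_indic => [|[[] b]]; last first.
- exact: measurable_history.
- by apply: measurableI; [exact: measurable_history | exact: r_mset].
rewrite -(pair_big xpredT xpredT (fun t b => c (t, b) * fine (P (A (t, b))))) /=.
rewrite big_bool /= /c /A /= -big_split /=; congr (_%:E); apply: eq_bigr => b _.
by rewrite prob_hist_next /cond_prob; ring.
Qed.

Lemma expect_hist_next m (K : {ffun 'I_m.+1 -> bool} -> R)
    (F G : {ffun 'I_m -> bool} -> R) :
  (forall x, K (hist_pattern m.+1 x) =
             F (hist_pattern m x) + G (hist_pattern m x) * r m.+1 x) ->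
  expect_hist K = expect_hist (fun b => F b + G b * cond_prob b).
Proof.
move=> KE; apply: EFin_inj; rewrite -integral_hist_pattern -integral_hist_next.
by apply: eq_integral => x _; rewrite KE.
Qed.

Lemma pbar_dev m x : pbar r m x - p = dev (hist_pattern m x).
Proof.
rewrite /dev /pbar /bmean; congr (_ * _ - _).
by apply: eq_big_nat => i im; rewrite (r_hist_pattern x im).
Qed.

Lemma dev_next m x :
  dev (hist_pattern m.+1 x) =
  (m.+1%:R)^-1 * (m%:R * dev (hist_pattern m x) - p + r m.+1 x).
Proof.
have sum_pbar k : \sum_(1 <= i < k.+1) r i x = k%:R * pbar r k x.
  case: k => [|k]; first by rewrite big_geq // mul0r.
  by rewrite /pbar mulrA mulfV ?mul1r // pnatr_eq0.
rewrite -!pbar_dev {1}/pbar big_nat_recr //= sum_pbar -natr1.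
by field; rewrite natr1 pnatr_eq0.
Qed.

Lemma expect_dev_next m :
  expect_hist (@dev m.+1) =
  (m.+1%:R)^-1 * (m.+1%:R - lam m.+1) * expect_hist (@dev m).
Proof.
rewrite (@expect_hist_next _ _ (fun b => (m.+1%:R)^-1 * (m%:R * dev b - p))
                               (fun _ => (m.+1%:R)^-1)) => [|x]; last first.
  by rewrite dev_next mulrDr.
rewrite -expect_histZ; congr expect_hist; apply/funext => b.
by rewrite /cond_prob -natr1; field; rewrite natr1 pnatr_eq0.
Qed.

Lemma expect_dev_eq0 m : expect_hist (@dev m.+1) = 0.
Proof.
by elim: m => [|m IH]; rewrite expect_dev_next ?IH ?mulr0 // lam1 subrr mulr0 mul0r.
Qed.

Lemma expect_dev2_next m :
  expect_hist (fun b : {ffun 'I_m.+1 -> bool} => dev b ^+ 2) =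
  (m.+1%:R ^+ 2)^-1 *
    (m%:R * (m.+2%:R - 2 * lam m.+1) *
       expect_hist (fun b : {ffun 'I_m -> bool} => dev b ^+ 2)
     + (1 - 2 * p) * (1 - lam m.+1) * expect_hist (@dev m) + p * (1 - p)).
Proof.
rewrite (@expect_hist_next _ _
  (fun b => (m.+1%:R ^+ 2)^-1 * (m%:R * dev b - p) ^+ 2)
  (fun b => (m.+1%:R ^+ 2)^-1 * (2 * (m%:R * dev b - p) + 1))) => [|x]; last first.
  by rewrite dev_next; case: (r01 x (ltn0Sn m)) => ->; rewrite -natr1; field;
    rewrite natr1 pnatr_eq0.
rewrite -(expect_hist_cst m (p * (1 - p))) -!expect_histZ -!expect_histD -expect_histZ.
congr expect_hist; apply/funext => b.
by rewrite /cond_prob -!natr1; field; rewrite natr1 pnatr_eq0.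
Qed.

Lemma expect_dev2 n : (1 <= n)%N ->
  expect_hist (fun b : {ffun 'I_n -> bool} => dev b ^+ 2) =
  p * (1 - p) * ((n%:R ^+ 2)^-1 +
     \sum_(1 <= i < n) ((i%:R ^+ 2)^-1 *
        \prod_(i.+1 <= j < n.+1) ((j.-1)%:R * (j.+1%:R - 2 * lam j) / (j%:R ^+ 2)))).
Proof.
move=> n1; rewrite mulrDr big_distrr /=.
under eq_bigr do rewrite mulrA.
apply: (@linear_recurrence_unroll _
  (fun k => expect_hist (fun b : {ffun 'I_k -> bool} => dev b ^+ 2))
  (fun i => p * (1 - p) * (i%:R ^+ 2)^-1)) => // [|[//|m] _].
  by rewrite expect_dev2_next lam1 subrr; field.
rewrite expect_dev2_next expect_dev_eq0 mulr0 addr0 /=.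
by field; apply: lt0r_neq0; have := ler0n R m; lra.
Qed.

End HistoryPatterns.

Theorem theoremA4 (d : measure_display) (T : measurableType d) (R : realType)
  (P : probability T R) (p : R) (lam : nat -> R) (r : nat -> T -> R)
  (hp : 0 < p < 1)
  (hlam1 : lam 1%N = 1)
  (hlam : forall n, (1 < n)%N -> 0 <= lam n <= lam n.-1)
  (hrmeas : forall i, (1 <= i)%N -> measurable_fun setT (r i))
  (hr01 : forall i x, (1 <= i)%N -> r i x = 0 \/ r i x = 1)
  (hr1 : P [set x | r 1%N x = 1] = p%:E)
  (hcond : forall (n : nat) (b : nat -> bool), (2 <= n)%N ->
     P (history r n.-1 b `&` [set x | r n x = 1]) =
     ((lam n * p + (1 - lam n) * bmean b n.-1)%:E * P (history r n.-1 b))%E)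
  (n : nat) (hn : (1 <= n)%N) :
  (\int[P]_x ((pbar r n x - p) ^+ 2)%:E)%E =
  (p * (1 - p) * ((n%:R ^+ 2)^-1 +
     \sum_(1 <= i < n) ((i%:R ^+ 2)^-1 *
        \prod_(i.+1 <= j < n.+1)
          ((j.-1)%:R * (j.+1%:R - 2 * lam j) / (j%:R ^+ 2)))))%:E.
Proof.
under eq_integral do rewrite (pbar_dev hr01).
rewrite (integral_hist_pattern P hrmeas hr01 (fun b => dev p b ^+ 2)).
by rewrite (expect_dev2 hrmeas hr01 hlam1 hr1 hcond hn).
Qed.
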